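(* Let $V$ be a finite-dimensional real representation of $SO(3)$ and $v\in V$. Then $\dim\mathbf{Cov}_1(v)\in\{0,1,3\}$, and the symmetry class of $\mathbf{Cov}_1(v)$ is: $[SO(3)]$ iff $\mathbf{Cov}_1(v)=\{0\}$; $[SO(2)]$ iff $\dim\mathbf{Cov}_1(v)=1$; the trivial class $[\{1\}]$ iff $\dim\mathbf{Cov}_1(v)=3$.
   Context: $\mathbf{Cov}_1(v)\subset\mathbb{R}^3$ is the set of values at $v$ of all $SO(3)$-equivariant polynomial maps $V\to\mathbb{R}^3$ (standard action on $\mathbb{R}^3$); it is a linear subspace. The symmetry group of a subspace $F\subset\mathbb{R}^3$ is $\{g\in SO(3): gx=x\ \forall x\in F\}$ and its symmetry class is the conjugacy class of this group in $SO(3)$. $SO(2)$ denotes the group of rotations about the $z$-axis. *)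

From HB Require Import structures.
From mathcomp Require Import all_boot all_order all_algebra.
From mathcomp Require Import reals.
From mathcomp Require mpoly.
Set Implicit Arguments. Unset Strict Implicit. Unset Printing Implicit Defensive.
Import Order.TTheory GRing.Theory Num.Theory.
Local Open Scope ring_scope.

Section Defs.
Variable R : realType.

Definition SO3 (g : 'M[R]_3) : Prop := g^T *m g = 1%:M /\ \det g = 1.

Definition rotz (c s : R) : 'M[R]_3 :=
  \matrix_(i < 3, j < 3)
    (if (i == 0%N :> nat) && (j == 0%N :> nat) then c
     else if (i == 0%N :> nat) && (j == 1%N :> nat) then - s
     else if (i == 1%N :> nat) && (j == 0%N :> nat) then s
     else if (i == 1%N :> nat) && (j == 1%N :> nat) then c
     else if (i == 2%N :> nat) && (j == 2%N :> nat) then 1 else 0).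

(* SO(2) = the group of rotations about the z-axis *)
Definition SO2 (g : 'M[R]_3) : Prop := exists c s : R, c ^+ 2 + s ^+ 2 = 1 /\ g = rotz c s.

Definition trivG (g : 'M[R]_3) : Prop := g = 1%:M.

Definition mx_cont_on {n : nat} (rho : 'M[R]_3 -> 'M[R]_n) : Prop :=
  forall g, SO3 g -> forall (i j : 'I_n) (e : R), 0 < e ->
    exists2 d : R, 0 < d & forall h, SO3 h ->
      (forall k l : 'I_3, `|h k l - g k l| < d) -> `|rho h i j - rho g i j| < e.

(* a finite-dimensional (continuous) real representation of SO(3) on R^n
   (column vectors), g . v = rho g *m v *)
Definition is_rep {n : nat} (rho : 'M[R]_3 -> 'M[R]_n) : Prop :=
  [/\ rho 1%:M = 1%:M,
      (forall g h, SO3 g -> SO3 h -> rho (g *m h) = rho g *m rho h)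
    & mx_cont_on rho].

Definition poly_map {n : nat} (f : 'cV[R]_n -> 'cV[R]_3) : Prop :=
  exists p : 'I_3 -> mpoly.mpoly n R,
    forall v : 'cV[R]_n, f v = \col_(k < 3) mpoly.meval (fun i => v i 0) (p k).

Definition equivariant {n : nat} (rho : 'M[R]_3 -> 'M[R]_n)
  (f : 'cV[R]_n -> 'cV[R]_3) : Prop :=
  forall g v, SO3 g -> f (rho g *m v) = g *m f v.

Definition Cov1 {n : nat} (rho : 'M[R]_3 -> 'M[R]_n) (v : 'cV[R]_n)
  (x : 'cV[R]_3) : Prop :=
  exists f, poly_map f /\ equivariant rho f /\ f v = x.

Definition subspace_dim (S : 'cV[R]_3 -> Prop) (d : nat) : Prop :=
  exists B : 'M[R]_(d, 3), row_free B /\ forall x, S x <-> (x^T <= B)%MS.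

Definition sym_group (F : 'cV[R]_3 -> Prop) (g : 'M[R]_3) : Prop :=
  SO3 g /\ forall x, F x -> g *m x = x.

Definition conj_class (H K : 'M[R]_3 -> Prop) : Prop :=
  exists2 a, SO3 a & forall g, H g <-> K (a^T *m g *m a).

End Defs.

(* Cov_1(v) is a linear subspace of R^3 closed under the cross product: sums, scalar
   multiples and cross products of equivariant polynomial maps are again such maps,
   because g(x × y) = gx × gy for g in SO(3).  If it contains two independent vectors
   u, w then u, w, u × w is a basis (its determinant is |u × w|^2), so its dimension is
   0, 1 or 3.  Accordingly its pointwise stabiliser is SO(3), a conjugate of the
   stabiliser SO(2) of the z-axis, or trivial, and these three classes are distinct.
   Only the equivariance equation involves rho. *)

From HB Require Import structures.
From mathcomp Require Import all_boot all_order all_algebra.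
From mathcomp Require Import reals.
From mathcomp Require Import ring lra.
From mathcomp Require Import mpoly.
From Stdlib Require Import Classical.
Set Implicit Arguments. Unset Strict Implicit. Unset Printing Implicit Defensive.
Import Order.TTheory GRing.Theory Num.Theory.
Local Open Scope ring_scope.

Ltac mx3_entrywise := apply/matrixP;
  case => [[|[|[|?]]] ?] //; case => [[|[|[|?]]] ?] //;
  repeat (rewrite ?mxE ?big_ord_recl ?big_ord0 /=); try done.

Section Coordinates.
Variable R : comPzRingType.

Definition M33 (a b c d e f g h i : R) : 'M[R]_3 :=
  \matrix_(k < 3, l < 3) nth 0 (nth [::] [:: [:: a; b; c]; [:: d; e; f]; [:: g; h; i]] k) l.

Definition V3 (a b c : R) : 'cV[R]_3 := \col_(k < 3) nth 0 [:: a; b; c] k.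

Lemma M33E (g : 'M[R]_3) :
  g = M33 (g 0 0) (g 0 1) (g 0 2) (g 1 0) (g 1 1) (g 1 2) (g 2 0) (g 2 1) (g 2 2).
Proof. by mx3_entrywise; congr (g _ _); apply: val_inj. Qed.

Lemma V3E (x : 'cV[R]_3) : x = V3 (x 0 0) (x 1 0) (x 2 0).
Proof. by mx3_entrywise; congr (x _ _); apply: val_inj. Qed.

Lemma V3_inj a b c a' b' c' : V3 a b c = V3 a' b' c' -> [/\ a = a', b = b' & c = c'].
Proof.
move=> E; have F k : V3 a b c k 0 = V3 a' b' c' k 0 by rewrite E.
by move: (F 0) (F 1) (F 2); rewrite !mxE.
Qed.

Lemma V3_0 : V3 0 0 0 = 0.
Proof. by mx3_entrywise. Qed.

Lemma V3Z k a b c : k *: V3 a b c = V3 (k * a) (k * b) (k * c).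
Proof. by mx3_entrywise. Qed.

Lemma mulM33 a b c d e f g h i a' b' c' d' e' f' g' h' i' :
  M33 a b c d e f g h i *m M33 a' b' c' d' e' f' g' h' i' =
  M33 (a*a' + b*d' + c*g') (a*b' + b*e' + c*h') (a*c' + b*f' + c*i')
      (d*a' + e*d' + f*g') (d*b' + e*e' + f*h') (d*c' + e*f' + f*i')
      (g*a' + h*d' + i*g') (g*b' + h*e' + i*h') (g*c' + h*f' + i*i').
Proof. by mx3_entrywise; ring. Qed.

Lemma mulM33V3 a b c d e f g h i x y z :
  M33 a b c d e f g h i *m V3 x y z =
  V3 (a*x + b*y + c*z) (d*x + e*y + f*z) (g*x + h*y + i*z).
Proof. by mx3_entrywise; ring. Qed.

Lemma trM33 a b c d e f g h i : (M33 a b c d e f g h i)^T = M33 a d g b e h c f i.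
Proof. by mx3_entrywise. Qed.

Lemma M33_1 : M33 1 0 0 0 1 0 0 0 1 = 1%:M.
Proof. by mx3_entrywise. Qed.

Lemma det_M33 a b c d e f g h i :
  \det (M33 a b c d e f g h i) = a*(e*i - f*h) - b*(d*i - f*g) + c*(d*h - e*g).
Proof.
rewrite (expand_det_row _ 0) !big_ord_recl big_ord0 /cofactor.
rewrite !(expand_det_row _ 0) !big_ord_recl !big_ord0 /cofactor /= !det_mx11 !mxE /=.
ring.
Qed.

End Coordinates.

Section CrossProduct.
Variable R : comPzRingType.

Definition cross (x y : 'cV[R]_3) : 'cV[R]_3 :=
  V3 (x 1 0 * y 2 0 - x 2 0 * y 1 0) (x 2 0 * y 0 0 - x 0 0 * y 2 0)
     (x 0 0 * y 1 0 - x 1 0 * y 0 0).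

Definition dotmul n (x y : 'cV[R]_n) : R := (x^T *m y) 0 0.

Lemma cross_mulmx (g : 'M[R]_3) x y : cross (g *m x) (g *m y) = (\adj g)^T *m cross x y.
Proof.
rewrite (M33E g) (V3E x) (V3E y); mx3_entrywise.
all: rewrite /cofactor !(expand_det_row _ 0) !big_ord_recl !big_ord0 /cofactor /=.
all: rewrite !det_mx11 !mxE /=; ring.
Qed.

Lemma cross_cross x y : cross x (cross x y) = dotmul x y *: x - dotmul x x *: y.
Proof. by rewrite (V3E x) (V3E y) /dotmul; mx3_entrywise; ring. Qed.

Definition col3 (x y z : 'cV[R]_3) : 'M[R]_3 := \matrix_(i, j) (nth 0 [:: x; y; z] j) i 0.

Lemma col3_mulmx x y z a b c : col3 x y z *m V3 a b c = a *: x + b *: y + c *: z.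
Proof. by rewrite (V3E x) (V3E y) (V3E z); mx3_entrywise; ring. Qed.

Lemma det_col3_cross x y : \det (col3 x y (cross x y)) = dotmul (cross x y) (cross x y).
Proof.
rewrite [col3 _ _ _]M33E det_M33 /dotmul !mxE !big_ord_recl big_ord0 !mxE /=; ring.
Qed.

End CrossProduct.

Lemma map_cross (R S : comPzRingType) (f : {rmorphism R -> S}) (x y : 'cV[R]_3) :
  map_mx f (cross x y) = cross (map_mx f x) (map_mx f y).
Proof. by mx3_entrywise; rewrite rmorphB !rmorphM. Qed.

Lemma dotmul_self_eq0 (R : realDomainType) n (x : 'cV[R]_n) : dotmul x x = 0 -> x = 0.
Proof.
rewrite /dotmul mxE => sum0; apply/matrixP => i j; rewrite ord1 mxE.
have sq_ge0 k : true -> 0 <= x^T 0 k * x k 0 by rewrite mxE -expr2 sqr_ge0.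
by have /eqP := psumr_eq0P sq_ge0 sum0 (i := i) isT; rewrite mxE -expr2 sqrf_eq0 => /eqP.
Qed.

Lemma cross0r (R : comPzRingType) (x : 'cV[R]_3) : cross x 0 = 0.
Proof. by rewrite /cross !mxE !mulr0 subrr V3_0. Qed.

Section RealCross.
Variable R : realFieldType.
Implicit Types x y z : 'cV[R]_3.

Lemma cross_eq0_colinear x y :
  x != 0 -> cross x y = 0 -> y = (dotmul x y / dotmul x x) *: x.
Proof.
move=> x0 xy0; have xx0 : dotmul x x != 0 by apply: contra_neq x0; apply: dotmul_self_eq0.
have /eqP := cross_cross x y; rewrite xy0 cross0r eq_sym subr_eq0 => /eqP xxy.
by apply: (scalerI xx0); rewrite scalerA mulrC divfK // xxy.
Qed.

Lemma cross_span x y : x != 0 -> (forall c, y != c *: x) ->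
  forall z, exists a b c, z = a *: x + b *: y + c *: cross x y.
Proof.
move=> x0 y_indep z; set T := col3 x y (cross x y).
have xy0 : cross x y != 0.
  apply/eqP => /(cross_eq0_colinear x0) y_colinear.
  by case/eqP: (y_indep (dotmul x y / dotmul x x)).
have T_unit : T \in unitmx.
  by rewrite unitmxE det_col3_cross unitfE; apply: contra_neq xy0; apply: dotmul_self_eq0.
set w := invmx T *m z; exists (w 0 0), (w 1 0), (w 2 0).
by rewrite -col3_mulmx -V3E mulKVmx.
Qed.

End RealCross.

Lemma sqr_add_eq0 (R : realDomainType) (a b : R) : a ^+ 2 + b ^+ 2 = 0 -> a = 0 /\ b = 0.
Proof.
by move/eqP; rewrite paddr_eq0 ?sqr_ge0 // !sqrf_eq0 => /andP[/eqP-> /eqP->].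
Qed.

Lemma polar_coords (R : rcfType) (p q : R) :
  exists c s r, [/\ c ^+ 2 + s ^+ 2 = 1, p = r * c & q = r * s].
Proof.
have [/sqr_add_eq0[-> ->]|pq0] := eqVneq (p ^+ 2 + q ^+ 2) 0.
  by exists 1, 0, 0; rewrite !mul0r expr1n expr0n addr0.
set r := Num.sqrt (p ^+ 2 + q ^+ 2).
have r2 : r ^+ 2 = p ^+ 2 + q ^+ 2 by rewrite sqr_sqrtr // addr_ge0 ?sqr_ge0.
have r0 : r != 0 by apply: contra_neq pq0 => r0; rewrite -r2 r0 expr0n.
exists (p / r), (q / r), r; split; rewrite ?[r * _]mulrC ?divfK //.
by rewrite !expr_div_n -mulrDl -r2 divff // sqrf_eq0.
Qed.

Lemma mulmx_fix_eq1 (R : pzRingType) n (g : 'M[R]_n) :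
  (forall x : 'cV[R]_n, g *m x = x) -> g = 1%:M.
Proof.
move=> gfix; apply/matrixP => i j; have := gfix (delta_mx j 0).
by rewrite -colE => /(congr1 (fun m : 'cV[R]_n => m i 0)); rewrite !mxE andbT => ->.
Qed.

Section Rotations.
Variable R : realType.
Implicit Types (g h a : 'M[R]_3) (x : 'cV[R]_3).

Lemma SO3_1 : SO3 (1%:M : 'M[R]_3).
Proof. by split; rewrite ?trmx1 ?mulmx1 ?det1. Qed.

Lemma SO3_mul g h : SO3 g -> SO3 h -> SO3 (g *m h).
Proof.
move=> [gTg detg] [hTh deth]; split; last by rewrite det_mulmx detg deth mulr1.
by rewrite trmx_mul mulmxA -(mulmxA h^T) gTg mulmx1.
Qed.

Lemma SO3_tr g : SO3 g -> SO3 g^T.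
Proof. by move=> [gTg detg]; split; rewrite ?det_tr // trmxK; apply: mulmx1C. Qed.

Lemma SO3_mulmx_tr g : SO3 g -> g *m g^T = 1%:M.
Proof. by move=> [gTg _]; apply: mulmx1C. Qed.

Lemma SO3_conj g a : SO3 a -> SO3 g -> SO3 (a *m g *m a^T).
Proof. by move=> Ha Hg; do 2?apply: SO3_mul => //; apply: SO3_tr. Qed.

Lemma SO3_conjT g a : SO3 a -> SO3 g -> SO3 (a^T *m g *m a).
Proof. by move=> /SO3_tr Ha /(SO3_conj Ha); rewrite trmxK. Qed.

Lemma conjK a g : SO3 a -> a^T *m (a *m g *m a^T) *m a = g.
Proof. by move=> [aTa _]; rewrite !mulmxA aTa mul1mx -mulmxA aTa mulmx1. Qed.

Lemma conjVK a g : SO3 a -> a *m (a^T *m g *m a) *m a^T = g.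
Proof. by move=> /SO3_mulmx_tr aaT; rewrite !mulmxA aaT mul1mx -mulmxA aaT mulmx1. Qed.

Lemma adj_SO3 g : SO3 g -> \adj g = g^T.
Proof.
move=> [gTg detg]; have ggT := SO3_mulmx_tr (conj gTg detg).
by rewrite -[\adj g]mulmx1 -ggT mulmxA mul_adj_mx detg mul1mx.
Qed.

Lemma SO3_cross g x y : SO3 g -> cross (g *m x) (g *m y) = g *m cross x y.
Proof. by move=> Hg; rewrite cross_mulmx adj_SO3 // trmxK. Qed.

Lemma SO3_M33 (a b c d e f g h i : R) :
  M33 a d g b e h c f i *m M33 a b c d e f g h i = M33 1 0 0 0 1 0 0 0 1 ->
  a*(e*i - f*h) - b*(d*i - f*g) + c*(d*h - e*g) = 1 ->
  SO3 (M33 a b c d e f g h i).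
Proof. by rewrite M33_1 => orth det1; split; rewrite ?trM33 ?det_M33. Qed.

Definition e3 : 'cV[R]_3 := V3 0 0 1.
Definition roty (c s : R) : 'M[R]_3 := M33 c 0 s 0 1 0 (- s) 0 c.
Definition half_turn_x : 'M[R]_3 := M33 1 0 0 0 (-1) 0 0 0 (-1).

Lemma e3_neq0 : e3 != 0.
Proof. by rewrite /e3 -V3_0; apply/eqP => /V3_inj[_ _ /eqP]; rewrite oner_eq0. Qed.

Lemma rotzE (c s : R) : rotz c s = M33 c (- s) 0 s c 0 0 0 1.
Proof. by mx3_entrywise. Qed.

Lemma SO3_rotz (c s : R) : c ^+ 2 + s ^+ 2 = 1 -> SO3 (rotz c s).
Proof.
move=> cs1; rewrite rotzE; apply: SO3_M33; rewrite ?mulM33; [congr M33|]; nra.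
Qed.

Lemma SO3_roty (c s : R) : c ^+ 2 + s ^+ 2 = 1 -> SO3 (roty c s).
Proof.
move=> cs1; apply: SO3_M33; rewrite ?mulM33; [congr M33|]; nra.
Qed.

Lemma SO3_half_turn_x : SO3 half_turn_x.
Proof. by apply: SO3_M33; rewrite ?mulM33; [congr M33|]; ring. Qed.

Lemma half_turn_x_neq1 : half_turn_x <> 1%:M.
Proof. by move/(congr1 (fun m : 'M[R]_3 => m 1 1)); rewrite !mxE /=; lra. Qed.

Lemma half_turn_x_notSO2 : ~ SO2 half_turn_x.
Proof. by case=> c [s [_ /(congr1 (fun m : 'M[R]_3 => m 2 2))]]; rewrite !mxE /=; lra. Qed.

Lemma SO2_nontrivial : exists2 g, @SO2 R g & g <> 1%:M.
Proof.
exists (rotz 0 1); first by exists 0, 1; split => //; ring.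
by move/(congr1 (fun m : 'M[R]_3 => m 0 0)); rewrite !mxE /=; lra.
Qed.

Lemma SO2_stab_e3 h : SO2 h <-> SO3 h /\ h *m e3 = e3.
Proof.
split=> [[c [s [cs1 ->]]]|[]].
  by split; [exact: SO3_rotz | rewrite rotzE mulM33V3; congr V3; ring].
rewrite (M33E h) /e3 => -[].
move: (h 0 0) (h 0 1) (h 0 2) (h 1 0) (h 1 1) (h 1 2) (h 2 0) (h 2 1) (h 2 2).
move=> a b c d e f g k i.
rewrite trM33 mulM33 det_M33 -M33_1 mulM33V3 => orth det1 /V3_inj[].
rewrite !mulr0 !add0r !mulr1 => c0 f0 i1; subst c f i.
have entry p q := congr1 (fun m : 'M[R]_3 => m p q) orth.
move: (entry 0 0) (entry 1 1) (entry 0 2) (entry 1 2) det1; rewrite !mxE /=.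
move=> norm1 norm2 dot13 dot23 det1.
have g0 : g = 0 by nra.
have k0 : k = 0 by nra.
(* |column 1|^2 + |column 2|^2 - 2 det = 0 *)
have sq0 : (e - a) ^+ 2 + (b + d) ^+ 2 = 0 by nra.
have [/eqP ea /eqP bd] := sqr_add_eq0 sq0.
move: ea bd; rewrite g0 k0 subr_eq0 addr_eq0 => /eqP-> /eqP->.
by exists a, d; split; [nra | rewrite rotzE].
Qed.

Lemma SO3_e3_onto_line x : x != 0 -> exists a r, [/\ SO3 a, r != 0 & x = r *: (a *m e3)].
Proof.
(* spherical coordinates: x = r (cos p sin t, sin p sin t, cos t) = r rotz(p) roty(t) e3 *)
rewrite (V3E x); move: (x 0 0) (x 1 0) (x 2 0) => x0 x1 x2 x_neq0.
have [cp [sp [rp [cp_sp x0E x1E]]]] := polar_coords x0 x1.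
have [ct [st [r [ct_st x2E rpE]]]] := polar_coords x2 rp.
exists (rotz cp sp *m roty ct st), r; split.
- by apply: SO3_mul; [apply: SO3_rotz | apply: SO3_roty].
- by apply: contra_neq x_neq0 => r0; rewrite x0E x1E x2E rpE r0 !mul0r V3_0.
- by rewrite rotzE /roty /e3 -mulmxA !mulM33V3 V3Z x0E x1E x2E rpE; congr V3; ring.
Qed.

End Rotations.

Arguments e3 {R}.
Arguments half_turn_x {R}.

Section Conjugacy.
Variable R : realType.
Implicit Types H K : 'M[R]_3 -> Prop.

Lemma conj_class_ext H K : (forall g, H g <-> K g) -> conj_class H K.
Proof. by move=> HK; exists 1%:M; [exact: SO3_1 | move=> g; rewrite trmx1 mul1mx mulmx1]. Qed.

Lemma conj_class_SO3 H : conj_class H (@SO3 R) -> forall g, SO3 g -> H g.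
Proof. by move=> [a Ha HK] g Hg; apply/HK; apply: SO3_conjT. Qed.

Lemma conj_class_trivG H : conj_class H (@trivG R) -> forall g, H g -> g = 1%:M.
Proof. by move=> [a Ha HK] g /HK g1; rewrite -(conjVK g Ha) g1 mulmx1 SO3_mulmx_tr. Qed.

Lemma conj_class_SO2_nontrivial H : conj_class H (@SO2 R) -> exists2 g, H g & g <> 1%:M.
Proof.
move=> [a Ha HK]; have [g SO2g g_neq1] := SO2_nontrivial R.
exists (a *m g *m a^T); first by apply/HK; rewrite conjK.
by move=> g1; apply: g_neq1; rewrite -(conjK g Ha) g1 mulmx1 (proj1 Ha).
Qed.

Lemma conj_class_SO2_proper H : conj_class H (@SO2 R) -> exists2 g, SO3 g & ~ H g.
Proof.
move=> [a Ha HK]; exists (a *m half_turn_x *m a^T).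
  exact: SO3_conj (SO3_half_turn_x R).
by move/HK; rewrite conjK //; apply: half_turn_x_notSO2.
Qed.

Lemma conj_class_SO3_SO2 H : conj_class H (@SO3 R) -> ~ conj_class H (@SO2 R).
Proof. by move=> /conj_class_SO3 HSO3 /conj_class_SO2_proper [g /HSO3]. Qed.

Lemma conj_class_SO3_trivG H : conj_class H (@SO3 R) -> ~ conj_class H (@trivG R).
Proof.
move=> /conj_class_SO3 HSO3 /conj_class_trivG Htriv.
exact: half_turn_x_neq1 (Htriv _ (HSO3 _ (SO3_half_turn_x R))).
Qed.

Lemma conj_class_SO2_trivG H : conj_class H (@SO2 R) -> ~ conj_class H (@trivG R).
Proof. by move=> /conj_class_SO2_nontrivial [g Hg g_neq1] /conj_class_trivG /(_ g Hg). Qed.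

End Conjugacy.

Section Covariants.
Variables (R : realType) (n : nat) (rho : 'M[R]_3 -> 'M[R]_n) (v : 'cV[R]_n).
Local Notation Cov := (Cov1 rho v).

Lemma col_meval (e : 'I_n -> R) (p : 'I_3 -> {mpoly R[n]}) :
  \col_k meval e (p k) = map_mx (meval e) (\col_k p k).
Proof. by apply/matrixP => i j; rewrite !mxE. Qed.

Lemma Cov1_0 : Cov 0.
Proof.
exists (fun=> 0); split; last by split=> // g w _; rewrite mulmx0.
by exists (fun=> 0) => w; apply/matrixP => i j; rewrite !mxE meval0.
Qed.

Lemma Cov1D x y : Cov x -> Cov y -> Cov (x + y).
Proof.
move=> [f [[p fp] [f_eq <-]]] [f' [[p' fp'] [f'_eq <-]]].
exists (fun w => f w + f' w); split; last first.
  by split=> // g w Hg; rewrite f_eq // f'_eq // mulmxDr.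
by exists (fun k => p k + p' k) => w; apply/matrixP => i j; rewrite fp fp' !mxE mevalD.
Qed.

Lemma Cov1Z c x : Cov x -> Cov (c *: x).
Proof.
move=> [f [[p fp] [f_eq <-]]].
exists (fun w => c *: f w); split; last by split=> // g w Hg; rewrite f_eq // scalemxAr.
by exists (fun k => c *: p k) => w; apply/matrixP => i j; rewrite fp !mxE mevalZ.
Qed.

Lemma Cov1_cross x y : Cov x -> Cov y -> Cov (cross x y).
Proof.
move=> [f [[p fp] [f_eq <-]]] [f' [[p' fp'] [f'_eq <-]]].
exists (fun w => cross (f w) (f' w)); split; last first.
  by split=> // g w Hg; rewrite f_eq // f'_eq // SO3_cross.
exists (fun k => cross (\col_k p k) (\col_k p' k) k 0) => w.
by rewrite fp fp' !col_meval -map_cross; apply/matrixP => i j; rewrite !mxE.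
Qed.

End Covariants.

Section CrossClosedSubspace.
Variables (R : realFieldType) (S : 'cV[R]_3 -> Prop).
Hypotheses (S0 : S 0) (SD : forall x y, S x -> S y -> S (x + y))
  (SZ : forall c x, S x -> S (c *: x)) (SX : forall x y, S x -> S y -> S (cross x y)).

Lemma cross_closed_cases :
  [\/ forall x, S x <-> x = 0,
      exists2 u, u != 0 & forall x, S x <-> exists c, x = c *: u
    | forall x, S x].
Proof.
have [[u [Su u0]]|no_u] := classic (exists u, S u /\ u != 0); last first.
  apply: Or31 => x; split=> [Sx|->//]; apply/eqP; apply: contra_notT no_u => x0.
  by exists x.
have [[w [Sw w_indep]]|no_w] := classic (exists w, S w /\ forall c, w != c *: u); last first.
  apply: Or32; exists u => // x; split=> [Sx|[c ->]]; last exact: SZ.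
  apply: NNPP => no_c; apply: no_w; exists x; split=> // c; apply/eqP => xE.
  by apply: no_c; exists c.
apply: Or33 => x; have [a [b [c ->]]] := cross_span u0 w_indep x.
by apply: SD; [apply: SD|]; apply: SZ => //; apply: SX.
Qed.

End CrossClosedSubspace.

Section SubspaceDim.
Variables (R : realType) (S : 'cV[R]_3 -> Prop).

Lemma subspace_dim0 : (forall x, S x <-> x = 0) -> subspace_dim S 0.
Proof.
move=> S_eq0; exists 0; split=> [|x]; first by rewrite /row_free mxrank0.
rewrite S_eq0; split=> [->|/submx0null/eqP]; first by rewrite trmx0 sub0mx.
by rewrite trmx_eq0 => /eqP.
Qed.

Lemma subspace_dim1 u : u != 0 -> (forall x, S x <-> exists c, x = c *: u) -> subspace_dim S 1.
Proof.
move=> u0 S_line; exists u^T; split.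
  by rewrite /row_free rank_rV trmx_eq0 u0.
move=> x; rewrite S_line; split=> [[c ->]|/sub_rVP [c xE]].
  by apply/sub_rVP; exists c; rewrite linearZ.
by exists c; apply: trmx_inj; rewrite xE linearZ.
Qed.

Lemma subspace_dim3 : (forall x, S x) -> subspace_dim S 3.
Proof.
by move=> S_all; exists 1%:M; split=> [|x]; rewrite ?row_free_unit ?unitmx1 ?submx1.
Qed.

End SubspaceDim.

Section SymmetryClass.
Variables (R : realType) (F : 'cV[R]_3 -> Prop).
Local Notation Sym := (sym_group F).

Lemma sym_group_zero : (forall x, F x <-> x = 0) -> conj_class Sym (@SO3 R).
Proof.
move=> F_eq0; apply: conj_class_ext => g; split=> [[]//|Hg].
by split=> // x /F_eq0 ->; rewrite mulmx0.
Qed.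

Lemma sym_group_full : (forall x, F x) -> conj_class Sym (@trivG R).
Proof.
move=> F_all; apply: conj_class_ext => g; split=> [[_ gfix]|->].
  by apply: mulmx_fix_eq1 => x; apply: gfix.
by split=> [|x _]; rewrite ?mul1mx //; apply: SO3_1.
Qed.

Lemma sym_group_line u :
  u != 0 -> (forall x, F x <-> exists c, x = c *: u) -> conj_class Sym (@SO2 R).
Proof.
move=> u0 F_line; have [a [r [Ha r0 uE]]] := SO3_e3_onto_line u0.
have symE g : Sym g <-> SO3 g /\ g *m u = u.
  split=> [[Hg gfix]|[Hg gu]].
    by split=> //; apply/gfix/F_line; exists 1; rewrite scale1r.
  by split=> // x /F_line [c ->]; rewrite -scalemxAr gu.
exists a => // g; rewrite symE SO2_stab_e3.
have SO3_iff : SO3 g <-> SO3 (a^T *m g *m a).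
  by split=> [|/(SO3_conj Ha)]; [apply: SO3_conjT | rewrite conjVK].
suff fix_iff : g *m u = u <-> a^T *m g *m a *m e3 = e3 by rewrite SO3_iff fix_iff.
rewrite uE -scalemxAr; split=> [/(scalerI r0) gae3|ae3].
  by rewrite -!mulmxA gae3 mulmxA (proj1 Ha) mul1mx.
by rewrite -[in RHS]ae3 -!mulmxA !(mulmxA a) SO3_mulmx_tr // mul1mx.
Qed.

End SymmetryClass.

Theorem proposition7p1 (R : realType) (n : nat) (rho : 'M[R]_3 -> 'M[R]_n)
  (hrho : is_rep rho) (v : 'cV[R]_n) :
  exists d : nat, subspace_dim (Cov1 rho v) d /\ (d \in [:: 0%N; 1%N; 3%N]) /\
    [/\ conj_class (sym_group (Cov1 rho v)) (@SO3 R) <-> (forall x, Cov1 rho v x <-> x = 0),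
        conj_class (sym_group (Cov1 rho v)) (@SO2 R) <-> d = 1%N
      & conj_class (sym_group (Cov1 rho v)) (@trivG R) <-> d = 3%N].
Proof.
set S := Cov1 rho v.
have S_not_zero u : S u -> u != 0 -> ~ (forall x, S x <-> x = 0).
  by move=> Su u0 /(_ u) [/(_ Su) u_eq0]; rewrite u_eq0 eqxx in u0.
have [S_eq0|[u u0 S_line]|S_all] := cross_closed_cases (Cov1_0 rho v)
  (@Cov1D _ _ rho v) (@Cov1Z _ _ rho v) (@Cov1_cross _ _ rho v).
- have C := sym_group_zero S_eq0.
  exists 0%N; split; first exact: subspace_dim0.
  split=> //; split; split=> //.
  + by move/(conj_class_SO3_SO2 C).
  + by move/(conj_class_SO3_trivG C).
- have C := sym_group_line u0 S_line.
  have Su : S u by apply/S_line; exists 1; rewrite scale1r.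
  exists 1%N; split; first exact: subspace_dim1 u0 S_line.
  split=> //; split; split=> //.
  + by move/conj_class_SO3_SO2/(_ C).
  + by move/(S_not_zero _ Su u0).
  + by move/(conj_class_SO2_trivG C).
- have C := sym_group_full S_all.
  exists 3%N; split; first exact: subspace_dim3.
  split=> //; split; split=> //.
  + by move/conj_class_SO3_trivG/(_ C).
  + by move/(S_not_zero _ (S_all e3) (e3_neq0 R)).
  + by move/conj_class_SO2_trivG/(_ C).
Qed.
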